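(* Let $-1\le a<1/4$ and $m\ge0$ an integer. For $\theta\in(2\pi/3,\pi)$ define \[ \zeta(\theta)=\frac{(2a-1)\cos\theta+\sqrt{(1-4a)\cos^2\theta+a}}{1-4a\cos^2\theta},\qquad g_m(\theta)=\frac{(\zeta(\theta)-\cos\theta)\sin((m+1)\theta)}{\sin\theta}-\cos((m+1)\theta)+\frac{1}{\zeta(\theta)^{m+1}}. \] Then the sign of $\lim_{\theta\to\pi^-}g_m(\theta)$ is $(-1)^m$. *)

From Stdlib Require Import Reals.
From Coquelicot Require Import Coquelicot.
Open Scope R_scope.

Definition zeta (a th : R) : R :=
  ((2 * a - 1) * cos th + sqrt ((1 - 4 * a) * (cos th) ^ 2 + a))
  / (1 - 4 * a * (cos th) ^ 2).

Definition g (a : R) (m : nat) (th : R) : R :=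
  (zeta a th - cos th) * sin (INR (S m) * th) / sin th
  - cos (INR (S m) * th) + 1 / (zeta a th) ^ (S m).

(* The quotient sin((m+1)θ)/sin θ is the Chebyshev polynomial U_m(cos θ), so g_m
   agrees on (0, π) with a function that is continuous at π, and the limit is its
   value there: with z = ζ(π),
     (-1)^m lim g_m = (z + 1)(m + 1) + 1 + (-1)^m z^{-(m+1)}.
   Since z >= 1 for -1 <= a < 1/4, the last term has modulus at most 1 and the
   right-hand side is positive. *)

From Stdlib Require Import Reals Lra.
From Coquelicot Require Import Coquelicot.
Open Scope R_scope.

Lemma nat_ind2 (P : nat -> Prop) :
  P 0%nat -> P 1%nat -> (forall n, P n -> P (S n) -> P (S (S n))) -> forall n, P n.
Proof.
  intros H0 H1 HS n.
  enough (P n /\ P (S n)) by tauto.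
  induction n as [|n [IH IHS]]; auto.
Qed.

Fixpoint cheb_U (n : nat) (x : R) : R :=
  match n with
  | O => 1
  | S O => 2 * x
  | S (S k as p) => 2 * x * cheb_U p x - cheb_U k x
  end.

Lemma sin_INR_mult_cheb_U (n : nat) (t : R) :
  sin (INR (S n) * t) = sin t * cheb_U n (cos t).
Proof.
  induction n as [| |n IH IHS] using nat_ind2.
  - simpl cheb_U; replace (INR 1 * t) with t by (simpl; ring); ring.
  - replace (INR 2 * t) with (2 * t) by (simpl; ring).
    rewrite sin_2a; simpl; ring.
  - set (x := INR (S (S n)) * t).
    assert (Hprev : sin (INR (S n) * t) = sin (x - t))
      by (f_equal; unfold x; rewrite (S_INR (S n)); ring).
    replace (INR (S (S (S n))) * t) with (x + t)
      by (unfold x; rewrite (S_INR (S (S n))); ring).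
    rewrite sin_minus in Hprev.
    transitivity (2 * cos t * sin x - sin (INR (S n) * t));
      [rewrite Hprev, sin_plus; ring|].
    unfold x; rewrite IH, IHS; simpl cheb_U; ring.
Qed.

Lemma cheb_U_m1 (n : nat) : cheb_U n (-1) = (-1) ^ n * INR (S n).
Proof.
  induction n as [| |n IH IHS] using nat_ind2; [simpl; ring | simpl; ring |].
  change (cheb_U (S (S n)) (-1))
    with (2 * (-1) * cheb_U (S n) (-1) - cheb_U n (-1)).
  rewrite IH, IHS, !S_INR; simpl; ring.
Qed.

Lemma ex_derive_cheb_U (n : nat) (x : R) : ex_derive (cheb_U n) x.
Proof.
  induction n as [| |n IH IHS] using nat_ind2.
  - apply ex_derive_const.
  - simpl; auto_derive; auto.
  - apply (ex_derive_minus (fun y => 2 * y * cheb_U (S n) y) (cheb_U n)); [|exact IH].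
    apply (ex_derive_mult (fun y => 2 * y)); [auto_derive; auto | exact IHS].
Qed.

Lemma cos_INR_mult_PI (n : nat) : cos (INR n * PI) = (-1) ^ n.
Proof.
  induction n as [|n IH].
  - simpl; rewrite Rmult_0_l; apply cos_0.
  - rewrite S_INR, Rmult_plus_distr_r, Rmult_1_l, neg_cos, IH; simpl; ring.
Qed.

Lemma one_le_zeta_PI (a : R) : -1 <= a < 1 / 4 -> 1 <= zeta a PI.
Proof.
  intros [ha1 ha2].
  unfold zeta; rewrite cos_PI.
  replace ((-1) ^ 2) with 1 by ring.
  apply Rle_div_r; [lra|].
  assert (Hs := sqrt_pos ((1 - 4 * a) * 1 + a)).
  assert (Hs2 := pow2_sqrt ((1 - 4 * a) * 1 + a) ltac:(lra)).
  (* sqrt (1 - 3a) >= -2a, as 4a^2 + 3a - 1 = (4a - 1)(a + 1) <= 0 *)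
  nra.
Qed.

Definition g_extension (a : R) (m : nat) (t : R) : R :=
  (zeta a t - cos t) * cheb_U m (cos t)
  - cos (INR (S m) * t) + 1 / zeta a t ^ S m.

Lemma g_eq_extension (a : R) (m : nat) (t : R) :
  sin t <> 0 -> g a m t = g_extension a m t.
Proof.
  intros Hsin; unfold g, g_extension.
  rewrite sin_INR_mult_cheb_U.
  replace ((zeta a t - cos t) * (sin t * cheb_U m (cos t)) / sin t)
    with ((zeta a t - cos t) * cheb_U m (cos t)) by (field; exact Hsin).
  reflexivity.
Qed.

Lemma continuous_g_extension (a : R) (m : nat) (t : R) :
  0 < (1 - 4 * a) * cos t ^ 2 + a -> 1 - 4 * a * cos t ^ 2 <> 0 ->
  zeta a t <> 0 -> continuous (g_extension a m) t.
Proof.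
  intros Hsq Hden Hz.
  apply (@ex_derive_continuous R_AbsRing R_NormedModule).
  unfold g_extension, zeta in *; auto_derive.
  repeat split; auto using ex_derive_cheb_U.
  exact (pow_nonzero _ (S m) Hz).
Qed.

Lemma g_extension_PI (a : R) (m : nat) :
  g_extension a m PI
  = (-1) ^ m * ((zeta a PI + 1) * INR (S m) + 1) + 1 / zeta a PI ^ S m.
Proof.
  unfold g_extension.
  rewrite cos_PI, cheb_U_m1, cos_INR_mult_PI; simpl; ring.
Qed.

Lemma sign_g_extension_PI (z : R) (m : nat) :
  1 <= z ->
  0 < (-1) ^ m * ((-1) ^ m * ((z + 1) * INR (S m) + 1) + 1 / z ^ S m).
Proof.
  intros Hz.
  assert (Hsq : (-1) ^ m * (-1) ^ m = 1)
    by (rewrite <- Rpow_mult_distr; replace (-1 * -1) with 1 by ring; apply pow1).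
  assert (Hw : 0 < 1 / z ^ S m <= 1).
  { assert (Hp : 1 <= z ^ S m) by (apply pow_R1_Rle; exact Hz).
    split; [apply Rdiv_lt_0_compat; lra|].
    apply Rle_div_l; lra. }
  assert (Hsgn : -1 <= (-1) ^ m <= 1)
    by (apply Rabs_le_between; rewrite pow_1_abs; lra).
  assert (Hmain : 0 < (z + 1) * INR (S m))
    by (apply Rmult_lt_0_compat; [lra | apply lt_0_INR, Nat.lt_0_succ]).
  assert (Hw' : 0 <= ((-1) ^ m + 1) * (1 / z ^ S m))
    by (apply Rmult_le_pos; lra).
  rewrite Rmult_plus_distr_l, <- Rmult_assoc, Hsq.
  lra.
Qed.

Theorem lemma2p10 (a : R) (m : nat) (ha1 : -1 <= a) (ha2 : a < 1 / 4) :
  exists L : R,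
    filterlim (g a m) (at_left PI) (locally L) /\ 0 < (-1) ^ m * L.
Proof.
  assert (Hz := one_le_zeta_PI a (conj ha1 ha2)).
  exists (g_extension a m PI); split.
  - apply filterlim_ext_loc with (g_extension a m).
    + apply (filter_imp (F := locally PI) (fun t => 0 < t));
        [|exact (open_gt 0 PI PI_RGT_0)].
      intros t Ht Hlt; symmetry; apply g_eq_extension.
      apply Rgt_not_eq, sin_gt_0; assumption.
    + apply (filterlim_filter_le_1 _ (filter_le_within _)).
      apply continuous_g_extension; rewrite ?cos_PI; lra.
  - rewrite g_extension_PI; apply sign_g_extension_PI; exact Hz.
Qed.
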